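(* Let $P\subseteq\mathbb R^n$ be a finite set, let $\alpha_0,\epsilon\ge0$, and let $P_0,P_1,\dots,P_m$ be finite sets with $P_0=P$ and, for each $k=0,\dots,m-1$, $P_{k+1}$ an $\alpha_0\epsilon^2(1+\epsilon)^{k-1}$-net of $P_k$. Then for every $k=0,\dots,m-1$, $$U(P;\alpha_0(1+\epsilon)^k)\subseteq U(P_{k+1};\alpha_0(1+\epsilon)^{k+1}).$$
   Context: For $\delta\ge0$, a subset $P'\subseteq Q$ is a $\delta$-net of $Q$ if (1) for every $q\in Q$ there is $q'\in P'$ with $\|q-q'\|\le\delta$, and (2) any two distinct $p,q\in P'$ satisfy $\|p-q\|>\delta$. For a finite $S\subseteq\mathbb R^n$ and $r\ge0$, $U(S;r)=\bigcup_{s\in S}B(s;r)$, where $B(s;r)$ is the open Euclidean ball of radius $r$ about $s$ for $r>0$, and $B(s;0)=\{s\}$. *)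

From HB Require Import structures.
From mathcomp Require Import all_boot all_order all_algebra.
From mathcomp Require Import reals.
Set Implicit Arguments. Unset Strict Implicit. Unset Printing Implicit Defensive.
Import Order.TTheory GRing.Theory Num.Theory.
Local Open Scope ring_scope.

Definition edist (R : realType) (n : nat) (x y : 'rV[R]_n) : R :=
  Num.sqrt (\sum_(i < n) (x ord0 i - y ord0 i) ^+ 2).

(* x \in B(s; r): open ball for r > 0, the singleton {s} for r = 0
   (only used with r >= 0). *)
Definition inBall (R : realType) (n : nat) (s : 'rV[R]_n) (r : R) (x : 'rV[R]_n) : Prop :=
  if 0 < r then edist s x < r else x == s.

Definition inU (R : realType) (n : nat) (S : seq 'rV[R]_n) (r : R) (x : 'rV[R]_n) : Prop :=
  exists2 s, s \in S & inBall s r x.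

Definition is_net (R : realType) (n : nat) (delta : R) (P' Q : seq 'rV[R]_n) : Prop :=
  {subset P' <= Q} /\
  (forall q, q \in Q -> exists2 q', q' \in P' & edist q q' <= delta) /\
  (forall p q, p \in P' -> q \in P' -> p <> q -> delta < edist p q).

(* Each net of the chain moves a point of P by at most its mesh, so P is covered
   by P_j within the sum of the meshes alpha0 eps^2 (1+eps)^(i-1), i < j, a
   geometric sum bounded by alpha0 eps (1+eps)^(j-1).  For j = k+1 the triangle
   inequality enlarges a ball of radius alpha0 (1+eps)^k by alpha0 eps (1+eps)^k,
   which gives the radius alpha0 (1+eps)^(k+1). *)
From HB Require Import structures.
From mathcomp Require Import all_boot all_order all_algebra.
From mathcomp Require Import reals ring lra zify.
Set Implicit Arguments. Unset Strict Implicit. Unset Printing Implicit Defensive.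
Import Order.TTheory GRing.Theory Num.Theory.
Local Open Scope ring_scope.

Section CauchySchwarz.
Variables (R : rcfType) (n : nat).

Lemma sumr_sqr_ge0 (a : 'I_n -> R) : 0 <= \sum_i a i ^+ 2.
Proof. by apply: sumr_ge0 => i _; exact: sqr_ge0. Qed.

Lemma cauchy_schwarz (a b : 'I_n -> R) :
  (\sum_i a i * b i) ^+ 2 <= (\sum_i a i ^+ 2) * (\sum_i b i ^+ 2).
Proof.
set A := \sum_i a i ^+ 2; set B := \sum_i b i ^+ 2; set C := \sum_i a i * b i.
have [A0|] := eqVneq A 0.
  have a0 i : a i = 0.
    apply/eqP; rewrite -sqrf_eq0; apply/eqP.
    by apply: (psumr_eq0P _ A0) => // j _; exact: sqr_ge0.
  have -> : C = 0 by rewrite /C big1 // => i _; rewrite a0 mul0r.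
  by rewrite expr0n mulr_ge0 ?sumr_sqr_ge0.
rewrite neq_lt ltNge sumr_sqr_ge0 /= => A_gt0.
(* expand the square norm of the projection residual [C a - A b] *)
have : 0 <= \sum_i (C * a i - A * b i) ^+ 2 by exact: sumr_sqr_ge0.
have -> : \sum_i (C * a i - A * b i) ^+ 2 = A * (A * B - C ^+ 2).
  transitivity (\sum_i (C ^+ 2 * a i ^+ 2 - 2 * C * A * (a i * b i) + A ^+ 2 * b i ^+ 2)).
    by apply: eq_bigr => i _; ring.
  rewrite big_split /= sumrB -!mulr_sumr -/A -/B -/C; ring.
by rewrite pmulr_rge0 // subr_ge0 => ->.
Qed.

Lemma cauchy_schwarz_sqrt (a b : 'I_n -> R) :
  \sum_i a i * b i <= Num.sqrt (\sum_i a i ^+ 2) * Num.sqrt (\sum_i b i ^+ 2).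
Proof.
rewrite -sqrtrM ?sumr_sqr_ge0 //.
apply: le_trans (ler_norm _) _; rewrite -sqrtr_sqr.
exact/ler_wsqrtr/cauchy_schwarz.
Qed.

End CauchySchwarz.

Section EuclideanDistance.
Variables (R : realType) (n : nat).
Implicit Types x y z : 'rV[R]_n.

Lemma edist_ge0 x y : 0 <= edist x y.
Proof. exact: sqrtr_ge0. Qed.

Lemma edist_sym x y : edist x y = edist y x.
Proof. by rewrite /edist; congr Num.sqrt; apply: eq_bigr => i _; ring. Qed.

Lemma edistxx x : edist x x = 0.
Proof. by rewrite /edist big1 ?sqrtr0 // => i _; rewrite subrr expr0n. Qed.

Lemma edist_le0 x y : edist x y <= 0 -> x = y.
Proof.
move=> le0; have : edist x y == 0 by rewrite eq_le le0 edist_ge0.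
rewrite /edist sqrtr_eq0 => sq_le0.
have /psumr_eq0P sq0 : \sum_i (x ord0 i - y ord0 i) ^+ 2 = 0.
  by apply/eqP; rewrite eq_le sq_le0 sumr_sqr_ge0.
apply/rowP => i; apply/eqP; rewrite -subr_eq0 -sqrf_eq0.
by rewrite sq0 // => j _; exact: sqr_ge0.
Qed.

Lemma edist_triangle x y z : edist x z <= edist x y + edist y z.
Proof.
rewrite /edist; set a := fun i => x ord0 i - y ord0 i; set b := fun i => y ord0 i - z ord0 i.
have -> : \sum_i (x ord0 i - z ord0 i) ^+ 2
          = \sum_i a i ^+ 2 + 2 * \sum_i a i * b i + \sum_i b i ^+ 2.
  rewrite mulr_sumr -!big_split /=; apply: eq_bigr => i _; rewrite /a /b; ring.
have CS := cauchy_schwarz_sqrt a b.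
rewrite -[leRHS]ger0_norm ?addr_ge0 ?sqrtr_ge0 // -sqrtr_sqr ler_wsqrtr //.
by rewrite sqrrD !sqr_sqrtr ?sumr_sqr_ge0 // -mulr_natr mulrC; lra.
Qed.

End EuclideanDistance.

Lemma sum_geometric_mesh_le (R : realFieldType) (a e : R) (j : nat) :
  0 <= a -> 0 <= e ->
  \sum_(i < j) a * e ^+ 2 * (1 + e) ^ (i%:Z - 1) <= a * e * (1 + e) ^ (j%:Z - 1).
Proof.
move=> a_ge0 e_ge0; have e1_gt0 : 0 < 1 + e by rewrite ltr_pwDl.
elim: j => [|j IHj].
  by rewrite big_ord0 !mulr_ge0 // exprz_ge0 // ltW.
have -> : j.+1%:Z - 1 = (j%:Z - 1) + 1 by lia.
rewrite big_ord_recr /= [in leRHS]exprzDr ?unitfE ?gt_eqF // expr1z.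
have -> : a * e * ((1 + e) ^ (j%:Z - 1) * (1 + e))
          = a * e * (1 + e) ^ (j%:Z - 1) + a * e ^+ 2 * (1 + e) ^ (j%:Z - 1) by ring.
exact: lerD.
Qed.

Section Covering.
Variables (R : realType) (n : nat).
Implicit Types (S T U : seq 'rV[R]_n) (d r : R) (x : 'rV[R]_n).

Definition covers d T S := forall s, s \in S -> exists2 t, t \in T & edist s t <= d.

Lemma net_covers d T S : is_net d T S -> covers d T S.
Proof. by case=> _ []. Qed.

Lemma covers_refl S : covers 0 S S.
Proof. by move=> s sS; exists s; rewrite ?edistxx. Qed.

Lemma covers_trans d1 d2 S T U :
  covers d1 T S -> covers d2 U T -> covers (d1 + d2) U S.
Proof.
move=> covST covTU s /covST[t /covTU[u uU tu] st]; exists u => //.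
exact: le_trans (edist_triangle s t u) (lerD st tu).
Qed.

Lemma covers_le d1 d2 T S : d1 <= d2 -> covers d1 T S -> covers d2 T S.
Proof. by move=> le_d covTS s /covTS[t tT st]; exists t => //; exact: le_trans le_d. Qed.

Lemma covers_chain (Ps : nat -> seq 'rV[R]_n) (d : nat -> R) (m : nat) :
  (forall k, (k < m)%N -> covers (d k) (Ps k.+1) (Ps k)) ->
  forall j, (j <= m)%N -> covers (\sum_(i < j) d i) (Ps j) (Ps 0%N).
Proof.
move=> cov_step; elim=> [_|j IHj lt_jm]; first by rewrite big_ord0; exact: covers_refl.
by rewrite big_ord_recr; apply: covers_trans (IHj (ltnW lt_jm)) (cov_step j lt_jm).
Qed.

Lemma covers0_subset T S : covers 0 T S -> {subset S <= T}.
Proof. by move=> covTS s /covTS[t tT /edist_le0 ->]. Qed.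

Lemma inU0 S x : inU S 0 x <-> x \in S.
Proof.
rewrite /inU /inBall ltxx; split=> [[s sS /eqP -> //]|xS].
by exists x.
Qed.

Lemma inU_covers d r T S x :
  covers d T S -> 0 < r -> inU S r x -> inU T (d + r) x.
Proof.
move=> covTS r_gt0 [s /covTS[t tT st]]; rewrite /inBall r_gt0 => sx.
have d_ge0 : 0 <= d := le_trans (edist_ge0 s t) st.
exists t; rewrite // /inBall ltr_wpDl //.
by apply: le_lt_trans (edist_triangle t s x) (ler_ltD _ sx); rewrite edist_sym.
Qed.

End Covering.

Theorem lemma19 (R : realType) (n : nat) (P : seq 'rV[R]_n) (alpha0 eps : R)
  (m : nat) (Ps : nat -> seq 'rV[R]_n) :
  0 <= alpha0 -> 0 <= eps ->
  Ps 0%N = P ->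
  (forall k : nat, (k < m)%N ->
     is_net (alpha0 * eps ^+ 2 * (1 + eps) ^ (k%:Z - 1)) (Ps k.+1) (Ps k)) ->
  forall k : nat, (k < m)%N ->
    forall x : 'rV[R]_n,
      inU P (alpha0 * (1 + eps) ^+ k) x ->
      inU (Ps k.+1) (alpha0 * (1 + eps) ^+ k.+1) x.
Proof.
move=> alpha0_ge0 eps_ge0 Ps0 nets k lt_km x.
have covP : covers (alpha0 * eps * (1 + eps) ^+ k) (Ps k.+1) P.
  rewrite -Ps0; apply: covers_le (covers_chain (fun j lt_jm => net_covers (nets j lt_jm)) lt_km).
  have -> : (1 + eps) ^+ k = (1 + eps) ^ (k.+1%:Z - 1) by rewrite exprnP; congr (_ ^ _); lia.
  exact: sum_geometric_mesh_le.
have -> : alpha0 * (1 + eps) ^+ k.+1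
          = alpha0 * eps * (1 + eps) ^+ k + alpha0 * (1 + eps) ^+ k by rewrite exprS; ring.
(* Radius 0 balls are singletons, so the case alpha0 = 0 needs exact covering. *)
have [alpha0_gt0|alpha0_le0] := ltP 0 alpha0.
  by apply: inU_covers covP _; rewrite mulr_gt0 // exprn_gt0 // ltr_pwDl.
have alpha0_0 : alpha0 = 0 by apply/eqP; rewrite eq_le alpha0_le0 alpha0_ge0.
rewrite alpha0_0 !mul0r addr0 in covP *.
by move/inU0 => xP; apply/inU0; exact: covers0_subset covP _ xP.
Qed.
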